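(* Let $2\leq s<t$ and let $(a_1,\dots,a_t,n_1,\dots,n_s)$ be integers with $a_1\geq\cdots\geq a_t\geq 2$, $n_1\geq\cdots\geq n_s\geq 2$, $a_l\neq n_j$ for all $l,j$, and $\prod_{l=1}^t a_l!=\prod_{j=1}^s n_j!$. Let $i_2,\dots,i_s$ be distinct elements of $\{2,\dots,t\}$ with $n_1>a_1$ and $n_j>a_{i_j}$ for $j=2,\dots,s$. Put $m_1=a_1+1$, $k_1=n_1-a_1$, $m_j=a_{i_j}+1$, $k_j=n_j-a_{i_j}$ ($j=2,\dots,s$), and $\Delta(m,k)=m(m+1)\cdots(m+k-1)$, so that $\prod_{l\notin\{1,i_2,\dots,i_s\}}a_l!=\prod_{j=1}^s\Delta(m_j,k_j)$. Then: (i) none of the integers $m_1,m_1+1,\dots,m_1+k_1-1$ is a prime; (ii) with $a=\max_{l\notin\{1,i_2,\dots,i_s\}}a_l$, one has $$a\log(a)-a\leq\log(a!)\leq (k_1+\cdots+k_s)\log(2m_1).$$ *)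

From Stdlib Require Import Reals Arith ZArith Znumtheory Lia.
Open Scope nat_scope.

Fixpoint prod_upto (n : nat) (f : nat -> nat) : nat :=
  match n with
  | O => 1
  | S p => prod_upto p f * f (S p)
  end.

Fixpoint sum_upto (n : nat) (f : nat -> nat) : nat :=
  match n with
  | O => 0
  | S p => sum_upto p f + f (S p)
  end.

Definition Delta (m k : nat) : nat := prod_upto k (fun r => m + r - 1)%nat.

Definition mseq (a i : nat -> nat) (j : nat) : nat :=
  if Nat.eqb j 1 then a 1 + 1 else a (i j) + 1.

Definition kseq (a n i : nat -> nat) (j : nat) : nat :=
  if Nat.eqb j 1 then n 1 - a 1 else n j - a (i j).

Open Scope nat_scope.
Definition in_rest (t s : nat) (i : nat -> nat) (l : nat) : Prop :=
  1 <= l <= t /\ l <> 1 /\ (forall j, 2 <= j <= s -> l <> i j).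

From Pilot Require Import Defs.
From Stdlib Require Import Reals Arith ZArith Znumtheory Lra Lia.
Open Scope nat_scope.

(* Let a = a_l with l outside {1, i_2, ..., i_s}.  A prime p with a_1 < p <= n_1
   divides n_1!, hence the right-hand side of the factorial identity, but none of
   the factors a_l! <= a_1! on the left; this is (i).  Bertrand's postulate then gives
   n_1 < 2 m_1.  Writing n_j! = a_{i_j}! Delta(m_j, k_j) and cancelling the a_{i_j}!,
   a! divides the product of the Delta(m_j, k_j), which has k_1 + ... + k_s factors,
   each at most n_1 < 2 m_1.  The lower bound a log a - a <= log a! follows by
   induction from log (1 + 1/x) <= 1/x.

   Bertrand's postulate is proved by Erdos's argument: if no prime lies in (n, 2n],
   then every prime power dividing C(2n, n) is at most 2n, primes above sqrt(2n)
   divide it at most once and only when they are at most 2n/3, so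
   4^n <= (2n + 1) C(2n, n) <= (2n + 1) (2n)^(2 sqrt(2n)) 4^(2n/3),
   which fails for n >= 2^13; smaller n are covered by a chain of primes. *)

Module Bertrand.
From mathcomp Require Import all_boot zify.

Lemma prime_dvd_fact p n : prime p -> (p %| n`!) = (p <= n).
Proof.
move=> p_pr; apply/idP/idP => [|le_pn]; last by rewrite dvdn_fact ?prime_gt0.
apply: contraTT; rewrite -ltnNge => lt_np.
rewrite fact_prod Euclid_dvd_prod // big_has; apply/hasPn => k.
by rewrite mem_index_iota => /andP [k_gt0 le_kn]; rewrite gtnNdvd //; lia.
Qed.

Lemma prime_dvd_prod_primes p (r : seq nat) :
  prime p -> p %| \prod_(q <- r | prime q) q -> p \in r.
Proof.
move=> p_pr; rewrite Euclid_dvd_prod // big_has_cond => /hasP [q q_r /andP [q_pr]].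
by rewrite dvdn_prime2 // => /eqP ->.
Qed.

Lemma prod_primes_dvd (r : seq nat) N : uniq r ->
  {in r, forall p, prime p -> p %| N} -> \prod_(p <- r | prime p) p %| N.
Proof.
elim: r => [|q r IHr] /=; first by rewrite big_nil dvd1n.
case/andP=> q_r r_uniq dvdN; rewrite big_cons.
have dvd_rest : \prod_(p <- r | prime p) p %| N.
  by apply: IHr => // p p_r; apply: dvdN; rewrite inE p_r orbT.
case: ifP => q_pr //.
rewrite Gauss_dvd ?dvd_rest ?dvdN ?mem_head ?prime_coprime //.
by apply: contra q_r; apply: prime_dvd_prod_primes.
Qed.

Lemma prod_sub_dvd (I : Type) (r : seq I) (P Q : pred I) (F : I -> nat) :
  subpred P Q -> \prod_(i <- r | P i) F i %| \prod_(i <- r | Q i) F i.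
Proof. exact: (sub_le_big dvdnn (fun x y => dvdn_mulr y (dvdnn x))). Qed.

Lemma bin_odd_le m : 'C(m.*2.+1, m) <= 4 ^ m.
Proof.
have sym : 'C(m.*2.+1, m.+1) = 'C(m.*2.+1, m).
  by rewrite -bin_sub; [congr binomial; lia | lia].
have : 2 ^ m.*2.+1 = \sum_(i < m.*2.+2) 'C(m.*2.+1, i).
  by rewrite -(addn1 1) expnDn; apply: eq_bigr => i _; rewrite !exp1n !muln1.
have [lt_m lt_m1] : m < m.*2.+2 /\ m.+1 < m.*2.+2 by lia.
rewrite (bigD1 (inord m)) // (bigD1 (inord m.+1)) /=; last first.
  by rewrite -val_eqE /= !inordK //; lia.
rewrite !inordK // sym.
by rewrite -muln2 mulnC expnS expnM (_ : 2 ^ 2 = 4) //; lia.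
Qed.

Lemma prime_dvd_bin_odd m p : prime p -> m.+1 < p <= m.*2.+1 -> p %| 'C(m.*2.+1, m).
Proof.
move=> p_pr /andP [lo hi].
have cop : coprime p (m`! * (m.*2.+1 - m)`!).
  by rewrite prime_coprime // Euclid_dvdM // !prime_dvd_fact //; lia.
by rewrite -(Gauss_dvdl _ cop) bin_fact ?dvdn_fact //; lia.
Qed.

Definition primorial n := \prod_(0 <= p < n.+1 | prime p) p.

Lemma primorial_le n : primorial n <= 4 ^ n.
Proof.
elim/ltn_ind: n => n IH.
case: (ltnP n 3) => [lt_n3 | n_ge3].
  by case: n {IH} lt_n3 => [|[|[|]]] // _; rewrite /primorial unlock.
have [n_odd | n_even] := boolP (odd n).
  have def_n : n = (n./2).*2.+1 by rewrite -[n in LHS]odd_double_half n_odd.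
  set m := n./2 in def_n *; rewrite def_n.
  have -> : primorial m.*2.+1 =
      primorial m.+1 * \prod_(m.+2 <= p < m.*2.+2 | prime p) p.
    by rewrite /primorial (big_cat_nat (n := m.+2)) //; lia.
  have le_prod : \prod_(m.+2 <= p < m.*2.+2 | prime p) p <= 4 ^ m.
    apply: leq_trans (bin_odd_le m); apply: dvdn_leq; first by rewrite bin_gt0; lia.
    apply: prod_primes_dvd (iota_uniq _ _) _ => p.
    by rewrite mem_index_iota => p_range p_pr; apply: prime_dvd_bin_odd.
  have -> : 4 ^ m.*2.+1 = 4 ^ m.+1 * 4 ^ m by rewrite -expnD; congr (_ ^ _); lia.
  by apply: leq_mul le_prod; apply: IH; lia.
case: n n_ge3 IH n_even => [|n'] // n_ge3 IH n_even.
have n_composite : ~~ prime n'.+1.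
  by apply/negP => /even_prime [two | odd_n]; [lia | rewrite odd_n in n_even].
rewrite /primorial big_mkcond big_nat_recr //= -big_mkcond -/(primorial n').
by rewrite (negPf n_composite) muln1 (leq_trans (IH _ _)) ?leq_exp2l.
Qed.

Lemma bin_central_succ n : n.+1 * 'C(n.+1.*2, n.+1) = (n.*2.+1).*2 * 'C(n.*2, n).
Proof.
have e1 := mul_bin_diag n.*2.+2 n.
have e2 := mul_bin_diag n.*2.+1 n.
have sym : 'C(n.*2.+1, n.+1) = 'C(n.*2.+1, n).
  by rewrite -bin_sub; [congr binomial; lia | lia].
rewrite /= sym in e1 e2; rewrite doubleS; nia.
Qed.

Lemma exp4_le_bin_central n : 4 ^ n <= n.*2.+1 * 'C(n.*2, n).
Proof.
elim: n => [|n IHn] //.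
rewrite -(leq_pmul2l (ltn0Sn n)) mulnCA bin_central_succ expnS; nia.
Qed.

Lemma sum_nat_trunc (F : nat -> nat) lo a b : lo <= a <= b ->
  (forall k, a <= k < b -> F k = 0) ->
  \sum_(lo <= k < b) F k = \sum_(lo <= k < a) F k.
Proof.
case/andP=> le_lo_a le_ab F0; rewrite (big_cat_nat le_lo_a le_ab) /=.
by rewrite [X in _ + X]big_nat_cond [X in _ + X]big1 ?addn0 // => k /andP [/F0].
Qed.

Lemma logn_bin_central p n : prime p -> 0 < n ->
  logn p 'C(n.*2, n) =
  \sum_(1 <= k < (trunc_log p n.*2).+1) (p ^ k <= (n %% p ^ k).*2).
Proof.
move=> p_pr n_gt0; have p_gt1 := prime_gt1 p_pr.
have p_exp_gt0 k : 0 < p ^ k by rewrite expn_gt0 prime_gt0.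
have n_lt_exp k : n < k -> n < p ^ k.
  by move=> lt_nk; apply: ltn_trans lt_nk (ltn_expl k p_gt1).
have exp_gt k : trunc_log p n.*2 < k -> n.*2 < p ^ k.
  by move=> lt_Kk; apply: leq_trans (trunc_log_ltn _ p_gt1) _; rewrite leq_exp2l.
have K_le : trunc_log p n.*2 <= n.*2.
  have := ltn_expl (trunc_log p n.*2) p_gt1.
  have := @trunc_logP p n.*2 p_gt1; lia.
have split_div k : n.*2 %/ p ^ k = (n %/ p ^ k).*2 + (p ^ k <= (n %% p ^ k).*2).
  by rewrite -!addnn divnD.
have := bin_fact (leq_addr n n); rewrite addKn addnn => fact_eq.
have := congr1 (logn p) fact_eq.
have le_n_n2 : n <= n.*2 by lia.
rewrite !lognM ?muln_gt0 ?bin_gt0 ?fact_gt0 ?le_n_n2 // !logn_fact // => log_eq.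
have sum_split : \sum_(1 <= k < n.*2.+1) n.*2 %/ p ^ k =
    2 * \sum_(1 <= k < n.*2.+1) n %/ p ^ k +
    \sum_(1 <= k < n.*2.+1) (p ^ k <= (n %% p ^ k).*2).
  by rewrite big_distrr -big_split; apply: eq_bigr => k _; rewrite split_div -mul2n.
have trunc_n : \sum_(1 <= k < n.*2.+1) n %/ p ^ k = \sum_(1 <= k < n.+1) n %/ p ^ k.
  apply: sum_nat_trunc => [|k /andP [lt_nk _]]; first lia.
  by rewrite divn_small // n_lt_exp.
have trunc_K : \sum_(1 <= k < n.*2.+1) (p ^ k <= (n %% p ^ k).*2) =
    \sum_(1 <= k < (trunc_log p n.*2).+1) (p ^ k <= (n %% p ^ k).*2).
  apply: sum_nat_trunc => [|k /andP [lt_Kk _]]; first lia.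
  by have := exp_gt k lt_Kk; have := leq_mod n (p ^ k); lia.
lia.
Qed.

Section CentralBinomialValuation.

Variables p n : nat.
Hypotheses (p_pr : prime p) (n_gt0 : 0 < n).

Lemma logn_bin_central_le : logn p 'C(n.*2, n) <= trunc_log p n.*2.
Proof.
rewrite logn_bin_central //.
apply: (@leq_trans (\sum_(1 <= k < (trunc_log p n.*2).+1) 1)).
  by apply: leq_sum => k _; apply: leq_b1.
by rewrite sum_nat_const_nat muln1 subn1.
Qed.

Lemma exp_logn_bin_central_le : p ^ logn p 'C(n.*2, n) <= n.*2.
Proof.
have p_gt1 := prime_gt1 p_pr.
apply: leq_trans (trunc_logP p_gt1 _); last by lia.
by rewrite leq_exp2l // logn_bin_central_le.
Qed.

Lemma logn_bin_central_sqrt :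
  n.*2 < p * p -> logn p 'C(n.*2, n) = (p <= (n %% p).*2).
Proof.
move=> lt_n2_pp; have p_gt1 := prime_gt1 p_pr.
rewrite logn_bin_central //.
have [lt_n2_p | le_p_n2] := ltnP n.*2 p.
  have -> : trunc_log p n.*2 = 0 by apply/eqP; rewrite trunc_log_eq0; lia.
  by rewrite big_geq // modn_small; lia.
have -> : trunc_log p n.*2 = 1 by apply: trunc_log_eq; rewrite // expn1 expnS expn1; lia.
by rewrite big_nat1 expn1.
Qed.

End CentralBinomialValuation.

Lemma prod_nat_widen_dvd X Y (P Q : pred nat) (F : nat -> nat) :
  subpred (fun p => P p && (p < X)) (fun p => Q p && (p < Y)) ->
  \prod_(0 <= p < X | P p) F p %| \prod_(0 <= p < Y | Q p) F p.
Proof.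
move=> PQ; rewrite (big_nat_widen 0 X (maxn X Y)) ?leq_maxl //.
by rewrite [X in _ %| X](big_nat_widen 0 Y (maxn X Y)) ?leq_maxr // prod_sub_dvd.
Qed.

Lemma exp4_gt k : 7 <= k -> 6 * k.+1 * (2 ^ k.+1).+1 < 4 ^ k.
Proof.
elim: k => [|k IHk] // le7k.
have [/IHk | ltk7] := leqP 7 k; last by have -> : k = 6 by lia.
rewrite !expnS; nia.
Qed.

Section ErdosArgument.

Variable n : nat.
Hypotheses (n_gt0 : 0 < n) (prime_gap : forall p, prime p -> n < p -> n.*2 < p).

Lemma exp_logn_bin_central_le_prime_gap B p : n.*2 < B * B ->
  p ^ logn p 'C(n.*2, n) <=
  (if p < B then n.*2 else 1) * (if prime p && (p <= n.*2 %/ 3) then p else 1).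
Proof.
move=> lt_n2_BB.
have if_gt0 (b : bool) m : 0 < m -> 0 < if b then m else 1 by case: b.
have [p_pr | p_npr] := boolP (prime p); last first.
  by rewrite lognE (negPf p_npr) /= muln_gt0 !if_gt0 //; lia.
have [lt_pB | le_Bp] := ltnP p B.
  apply: leq_trans (exp_logn_bin_central_le _ _ p_pr n_gt0) _.
  by rewrite leq_pmulr // if_gt0 ?prime_gt0.
have lt_n2_pp : n.*2 < p * p := leq_trans lt_n2_BB (leq_mul le_Bp le_Bp).
rewrite logn_bin_central_sqrt // mul1n.
case: (leqP p (n.*2 %/ 3)) => [_ | lt_M_p].
  by case: (p <= _); rewrite ?expn1 ?expn0 ?prime_gt0.
rewrite ltn_divLR // in lt_M_p.
suff -> : (p <= (n %% p).*2) = false by [].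
have [le_pn | lt_np] := leqP p n.
  by rewrite -(subnK le_pn) modnDr modn_small; lia.
by rewrite modn_small //; have := prime_gap _ p_pr lt_np; lia.
Qed.

Lemma bin_central_le_prime_gap B : n.*2 < B * B ->
  'C(n.*2, n) <= n.*2 ^ B * 4 ^ (n.*2 %/ 3).
Proof.
move=> lt_n2_BB; have C_gt0 : 0 < 'C(n.*2, n) by rewrite bin_gt0; lia.
rewrite -{1}(partnT C_gt0) /partn (eq_bigl xpredT) //.
apply: leq_trans (leq_prod (fun p _ => exp_logn_bin_central_le_prime_gap B p lt_n2_BB)) _.
rewrite big_split -!big_mkcond /=; apply: leq_mul.
  apply: dvdn_leq; first by rewrite expn_gt0; lia.
  have -> : n.*2 ^ B = \prod_(0 <= p < B) n.*2 by rewrite prod_nat_const_nat subn0.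
  by apply: prod_nat_widen_dvd => p /andP [->].
apply: leq_trans (primorial_le _); apply: dvdn_leq.
  by apply: prodn_cond_gt0 => p /prime_gt0.
by apply: prod_nat_widen_dvd => p /andP [/andP [-> le_pM] _].
Qed.

Lemma prime_gap_small : n < 2 ^ 13.
Proof.
rewrite ltnNge; apply/negP => le_n.
have n2_gt0 : 0 < n.*2 by lia.
set k := trunc_log 4 n.*2.
have le_4k : 4 ^ k <= n.*2 := trunc_logP (isT : 1 < 4) n2_gt0.
have lt_4k1 : n.*2 < 4 ^ k.+1 := trunc_log_ltn _ (isT : 1 < 4).
have le7k : 7 <= k.
  by apply: trunc_log_max => //; rewrite (_ : 4 ^ 7 = (2 ^ 13).*2) // leq_double.
set B := 2 ^ k.+1.
have lt_n2_BB : n.*2 < B * B by rewrite -expnMn.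
have le_n2B : n.*2 ^ B <= 4 ^ (k.+1 * B) by rewrite expnM leq_exp2r ?expn_gt0 // ltnW.
have : 4 ^ n <= 4 ^ k.+1 * (4 ^ (k.+1 * B) * 4 ^ (n.*2 %/ 3)).
  apply: leq_trans (exp4_le_bin_central n) (leq_mul lt_4k1 _).
  exact: leq_trans (bin_central_le_prime_gap B lt_n2_BB) (leq_mul le_n2B (leqnn _)).
rewrite -!expnD leq_exp2l // => le_n_sum.
have := exp4_gt _ le7k; have := leq_divM n.*2 3; rewrite -/B; nia.
Qed.

End ErdosArgument.

Lemma prime_chain_bertrand n q ps :
  all prime ps -> path (fun p p' => p < p' <= p.*2) q ps -> q <= n < last q ps ->
  exists2 p, prime p & n < p <= n.*2.
Proof.
elim: ps q => [|p ps IHps] q /=; first by lia.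
case/andP=> p_pr ps_pr /andP [q_p p_path] n_range.
have [lt_np | le_pn] := ltnP n p; first by exists p => //; lia.
by apply: (IHps p) => //; lia.
Qed.

Local Set Warnings "-abstract-large-number".
(* Each prime is less than twice its predecessor, and the last one exceeds 2^13. *)
Definition prime_chain :=
  [:: 2; 3; 5; 7; 13; 23; 43; 83; 163; 317; 631; 1259; 2503; 5003; 9973].

Theorem bertrand n : 0 < n -> exists2 p, prime p & n < p <= n.*2.
Proof.
move=> n_gt0; have [lt_n_213 | le_213_n] := ltnP n (2 ^ 13).
  have chain_end : 2 ^ 13 <= last 1 prime_chain by vm_compute.
  by apply: (prime_chain_bertrand n 1 prime_chain); [vm_compute | vm_compute | lia].
have [|/hasPn no_prime] := boolP (has prime (index_iota n.+1 n.*2.+1)).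
  by case/hasP=> p; rewrite mem_index_iota => p_range p_pr; exists p => //; lia.
have prime_gap p : prime p -> n < p -> n.*2 < p.
  move=> p_pr lt_np; rewrite ltnNge; apply: contraL p_pr => le_p_n2.
  by apply: no_prime; rewrite mem_index_iota; lia.
by have := prime_gap_small _ n_gt0 prime_gap; lia.
Qed.

End Bertrand.

Module FactorialEquation.
From mathcomp Require Import all_boot zify.
Import Bertrand.

Lemma prod_upto_big n f : prod_upto n f = \prod_(1 <= k < n.+1) f k.
Proof.
elim: n => [|n IHn]; first by rewrite big_geq.
by rewrite /= IHn [in RHS]big_nat_recr.
Qed.

Lemma sum_upto_big n f : sum_upto n f = \sum_(1 <= k < n.+1) f k.
Proof.
elim: n => [|n IHn]; first by rewrite big_geq.
by rewrite /= IHn [in RHS]big_nat_recr.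
Qed.

Lemma fact_factorial n : fact n = n`!.
Proof. by elim: n => // n IHn; rewrite factS -IHn. Qed.

Lemma pow_expn m k : Nat.pow m k = m ^ k.
Proof. by elim: k => // k IHk; rewrite expnS -IHk. Qed.

Lemma prime_of_Zprime x : Znumtheory.prime (Z.of_nat x) -> prime x.
Proof.
move=> x_pr; have lt1x : (1 < Z.of_nat x)%Z by case: x_pr.
apply/primeP; split; first by lia.
move=> d /dvdnP [q def_x].
have /(prime_divisors _ x_pr) : (Z.of_nat d | Z.of_nat x)%Z.
  by exists (Z.of_nat q); rewrite def_x Nat2Z.inj_mul.
lia.
Qed.

(* [Defs.Delta] is qualified because [Reals] also exports a [Delta]. *)
Lemma fact_Delta m k : (m + k)`! = m`! * Defs.Delta m.+1 k.
Proof.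
elim: k => [|k IHk]; first by rewrite addn0 muln1.
rewrite addnS factS IHk /Defs.Delta /= -/(Defs.Delta m.+1 k); nia.
Qed.

Lemma Delta_gt0 m k : 0 < Defs.Delta m.+1 k.
Proof. by have := fact_gt0 (m + k); rewrite fact_Delta muln_gt0 => /andP []. Qed.

Lemma Delta_le m k B : m + k <= B.+1 -> Defs.Delta m k <= B ^ k.
Proof.
elim: k => [|k IHk] // le_mkB.
rewrite /Defs.Delta /= -/(Defs.Delta m k) expnSr leq_mul ?IHk //; lia.
Qed.

Lemma noninc_le (a : nat -> nat) t : (forall l, 1 <= l < t -> a l.+1 <= a l) ->
  forall l l', 1 <= l <= l' -> l' <= t -> a l' <= a l.
Proof.
move=> a_noninc l; elim=> [|l' IHl'] le_ll' le_l't; first by lia.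
have [-> // | lt_ll'] := eqVneq l l'.+1.
by apply: leq_trans (a_noninc l' _) (IHl' _ _); lia.
Qed.

Lemma prod_subseq_dvd (I : eqType) (r r' : seq I) (F : I -> nat) :
  uniq r -> uniq r' -> {subset r <= r'} -> \prod_(i <- r) F i %| \prod_(i <- r') F i.
Proof. exact: (uniq_sub_le_big dvdnn (fun x y => dvdn_mulr y (dvdnn x))). Qed.

(* The paper's index i_j, with the convention i_1 = 1. *)
Definition matched (i : nat -> nat) j := if j == 1 then 1 else i j.

Lemma mseq_matched a i j : mseq a i j = (a (matched i j)).+1.
Proof. by rewrite /mseq /matched -[Nat.eqb j 1]/(j == 1); case: (j == 1); lia. Qed.

Lemma kseq_matched a n i j : kseq a n i j = n j - a (matched i j).
Proof. by rewrite /kseq /matched -[Nat.eqb j 1]/(j == 1); case: eqP => [->|]. Qed.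

Section FactorialIdentity.

Variables (s t : nat) (a n i : nat -> nat).
Hypothesis Hs : (2 <= s)%coq_nat.
Hypothesis Hst : (s < t)%coq_nat.
Hypothesis Ha_mono : forall l, (1 <= l)%coq_nat /\ (l < t)%coq_nat -> (a l.+1 <= a l)%coq_nat.
Hypothesis Ha2 : (2 <= a t)%coq_nat.
Hypothesis Hn_mono : forall j, (1 <= j)%coq_nat /\ (j < s)%coq_nat -> (n j.+1 <= n j)%coq_nat.
Hypothesis Hprod : prod_upto t (fun l => fact (a l)) = prod_upto s (fun j => fact (n j)).
Hypothesis Hi_range : forall j, (2 <= j)%coq_nat /\ (j <= s)%coq_nat ->
  (2 <= i j)%coq_nat /\ (i j <= t)%coq_nat.
Hypothesis Hi_inj : forall j j', (2 <= j)%coq_nat /\ (j <= s)%coq_nat ->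
  (2 <= j')%coq_nat /\ (j' <= s)%coq_nat -> i j = i j' -> j = j'.
Hypothesis Hn1 : (a 1 < n 1)%coq_nat.
Hypothesis Hnj : forall j, (2 <= j)%coq_nat /\ (j <= s)%coq_nat -> (a (i j) < n j)%coq_nat.

Let a_noninc l : 1 <= l < t -> a l.+1 <= a l.
Proof. by move=> l_range; have := Ha_mono l; lia. Qed.

Let n_noninc j : 1 <= j < s -> n j.+1 <= n j.
Proof. by move=> j_range; have := Hn_mono j; lia. Qed.

Let fact_prod_eq : \prod_(1 <= l < t.+1) (a l)`! = \prod_(1 <= j < s.+1) (n j)`!.
Proof.
rewrite -(eq_bigr _ (fun l _ => fact_factorial (a l))).
by rewrite -(eq_bigr _ (fun j _ => fact_factorial (n j))) -!prod_upto_big.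
Qed.

Let matched_range j : 1 <= j <= s -> 1 <= matched i j <= t.
Proof. by rewrite /matched; case: eqP => [-> | ne1] j_range; [|have := Hi_range j]; lia. Qed.

Let a_matched_lt j : 1 <= j <= s -> a (matched i j) < n j.
Proof. by rewrite /matched; case: eqP => [-> | ne1] j_range; [|have := Hnj j]; lia. Qed.

Let matched_inj : {in index_iota 1 s.+1 &, injective (matched i)}.
Proof.
move=> j j'; rewrite !mem_index_iota /matched.
case: eqP => [-> | ne1]; case: eqP => [-> | ne1'] // j_range j'_range.
- by have := Hi_range j'; lia.
- by have := Hi_range j; lia.
- by apply: Hi_inj; lia.
Qed.

Let fact_n_split j : 1 <= j < s.+1 ->
  (n j)`! = (a (matched i j))`! * Defs.Delta (mseq a i j) (kseq a n i j).
Proof.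
move=> j_range; rewrite mseq_matched kseq_matched -fact_Delta subnKC //.
by have := a_matched_lt j; lia.
Qed.

Lemma prime_le_n1_le_a1 p : prime p -> p <= n 1 -> p <= a 1.
Proof.
move=> p_pr le_p_n1.
have : p %| \prod_(1 <= j < s.+1) (n j)`!.
  by rewrite big_ltn; [apply: dvdn_mulr; rewrite prime_dvd_fact | lia].
rewrite -fact_prod_eq Euclid_dvd_prod // big_has => /hasP [l].
rewrite mem_index_iota prime_dvd_fact // => l_range le_p_al.
by apply: leq_trans le_p_al (noninc_le _ _ a_noninc 1 l _ _); lia.
Qed.

Lemma n1_lt_double : n 1 < (mseq a i 1).*2.
Proof.
have [p p_pr /andP [lt_a1_p le_p]] := bertrand (a 1).+1 (ltn0Sn _).
have := prime_le_n1_le_a1 p p_pr; rewrite mseq_matched /matched /=; lia.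
Qed.

Lemma no_prime_in_first_block x :
  (mseq a i 1 <= x)%coq_nat /\ (x < mseq a i 1 + kseq a n i 1)%coq_nat ->
  ~ Znumtheory.prime (Z.of_nat x).
Proof.
move=> x_range /prime_of_Zprime x_pr; have := prime_le_n1_le_a1 x x_pr.
by rewrite mseq_matched kseq_matched /matched /= in x_range; lia.
Qed.

Lemma fact_dvd_prod_Delta l : in_rest t s i l ->
  (a l)`! %| \prod_(1 <= j < s.+1) Defs.Delta (mseq a i j) (kseq a n i j).
Proof.
case=> l_range [l_ne1 l_ne_i].
set J := index_iota 1 s.+1.
have l_notin : l \notin map (matched i) J.
  apply/mapP => [[j]]; rewrite mem_index_iota /matched.
  by case: eqP => [_ | ne1] j_range; [lia | apply: l_ne_i; lia].
have uniq_L : uniq (l :: map (matched i) J).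
  by rewrite /= l_notin map_inj_in_uniq // iota_uniq.
have sub_L : {subset l :: map (matched i) J <= index_iota 1 t.+1}.
  move=> l'; rewrite inE mem_index_iota => /predU1P [-> | /mapP [j j_in ->]]; first by lia.
  by move: j_in; rewrite mem_index_iota => /matched_range.
have := prod_subseq_dvd _ _ _ (fun l => (a l)`!) uniq_L (iota_uniq _ _) sub_L.
rewrite big_cons big_map fact_prod_eq (eq_big_nat _ _ fact_n_split) big_split /=.
rewrite mulnC dvdn_pmul2l //.
by apply: prodn_gt0 => j; apply: fact_gt0.
Qed.

Lemma fact_rest_le l : in_rest t s i l ->
  (fact (a l) <= Nat.pow (2 * mseq a i 1) (sum_upto s (kseq a n i)))%coq_nat.
Proof.
move=> l_rest; apply/leP; rewrite fact_factorial pow_expn sum_upto_big expn_sum mul2n.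
apply: leq_trans (dvdn_leq _ (fact_dvd_prod_Delta _ l_rest)) _.
  by apply: prodn_gt0 => j; rewrite mseq_matched Delta_gt0.
rewrite big_nat [X in _ <= X]big_nat; apply: leq_prod => j j_range.
apply: Delta_le; rewrite mseq_matched kseq_matched.
have := a_matched_lt j; have := n1_lt_double; have := noninc_le _ _ n_noninc 1 j.
lia.
Qed.

Lemma a_rest_ge2 l : in_rest t s i l -> (2 <= a l)%coq_nat.
Proof. by case=> l_range _; have := noninc_le _ _ a_noninc l t; lia. Qed.

End FactorialIdentity.

End FactorialEquation.

Section LogBounds.
Local Open Scope R_scope.

Lemma ln_le x y : 0 < x -> x <= y -> ln x <= ln y.
Proof.
intros x_pos [lt_xy | ->]; [left; now apply ln_increasing | right; reflexivity].
Qed.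

Lemma mul_ln_succ_sub_le1 x : 0 < x -> x * (ln (x + 1) - ln x) <= 1.
Proof.
intros x_pos.
assert (inv_pos : 0 < / x) by now apply Rinv_0_lt_compat.
assert (ln_eq : ln (x + 1) - ln x = ln (1 + / x)).
{ replace (1 + / x) with ((x + 1) * / x) by (field; lra).
  rewrite ln_mult, ln_Rinv by lra; ring. }
assert (ln_le_inv : ln (1 + / x) <= / x).
{ rewrite <- (ln_exp (/ x)) at 2; apply ln_le; [lra | apply exp_ineq1_le]. }
rewrite ln_eq.
apply Rle_trans with (x * / x); [apply Rmult_le_compat_l; lra | ].
rewrite Rinv_r by lra; lra.
Qed.

Lemma ln_fact_ge n : (1 <= n)%nat -> INR n * ln (INR n) - INR n <= ln (INR (fact n)).
Proof.
induction n as [|n IHn]; intros n_pos; [lia |].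
destruct (Nat.eq_dec n 0) as [-> | n_ne0].
- simpl; rewrite ln_1; lra.
- assert (n_ge1 : 1 <= INR n) by (apply (le_INR 1); lia).
  assert (fact_pos : 0 < INR (fact n)) by apply lt_0_INR, lt_O_fact.
  specialize (IHn ltac:(lia)).
  assert (step := mul_ln_succ_sub_le1 (INR n) ltac:(lra)).
  replace (fact (S n)) with (S n * fact n)%nat by reflexivity.
  rewrite mult_INR, S_INR, ln_mult by lra.
  nra.
Qed.

Lemma ln_INR_le_pow (x b k : nat) : (0 < x)%nat -> (0 < b)%nat -> (x <= b ^ k)%nat ->
  ln (INR x) <= INR k * ln (INR b).
Proof.
intros x_pos b_pos le_x.
rewrite <- ln_pow, <- pow_INR by now apply lt_0_INR.
apply ln_le; [now apply lt_0_INR | now apply le_INR].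
Qed.

End LogBounds.

Theorem lemma2p3 (s t : nat) (a n i : nat -> nat)
  (Hs : 2 <= s) (Hst : s < t)
  (Ha_mono : forall l, 1 <= l < t -> a (S l) <= a l)
  (Ha2 : 2 <= a t)
  (Hn_mono : forall j, 1 <= j < s -> n (S j) <= n j)
  (Hn2 : 2 <= n s)
  (Hneq : forall l j, 1 <= l <= t -> 1 <= j <= s -> a l <> n j)
  (Hprod : prod_upto t (fun l => fact (a l)) = prod_upto s (fun j => fact (n j)))
  (Hi_range : forall j, 2 <= j <= s -> 2 <= i j <= t)
  (Hi_inj : forall j j', 2 <= j <= s -> 2 <= j' <= s -> i j = i j' -> j = j')
  (Hn1 : a 1 < n 1)
  (Hnj : forall j, 2 <= j <= s -> a (i j) < n j) :
  (forall x, mseq a i 1 <= x < mseq a i 1 + kseq a n i 1 ->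
     ~ prime (Z.of_nat x)) /\
  (forall amax : nat,
     (exists l, in_rest t s i l /\ a l = amax) ->
     (forall l, in_rest t s i l -> a l <= amax) ->
     (INR amax * ln (INR amax) - INR amax <= ln (INR (fact amax)) <=
      INR (sum_upto s (kseq a n i)) * ln (2 * INR (mseq a i 1)))%R).
Proof.
split.
- intros x x_range.
  apply (FactorialEquation.no_prime_in_first_block s t a n i); assumption.
- intros amax [l [l_rest <-]] _.
  assert (a_l_ge2 : 2 <= a l) by (apply (FactorialEquation.a_rest_ge2 s t a n i); assumption).
  assert (fact_le : fact (a l) <= (2 * mseq a i 1) ^ sum_upto s (kseq a n i))
    by (apply (FactorialEquation.fact_rest_le s t a n i); assumption).
  split.
  + apply ln_fact_ge; lia.
  + replace (2 * INR (mseq a i 1))%R with (INR (2 * mseq a i 1))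
      by (rewrite mult_INR; simpl; ring).
    apply ln_INR_le_pow; [apply lt_O_fact | unfold mseq; simpl; lia | exact fact_le].
Qed.
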